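(* Let $G$ be a random threshold graph on $n\ge3$ vertices and let $\psi(G)$ be the length of a longest cycle in $G$. Then for every integer $k$ with $3\le k\le n$, $$P(\psi(G)=k)=\left(\tfrac12\right)^{n-1}\left[\binom{n-1}{\lfloor k/2\rfloor}-\binom{k-2}{\lfloor k/2\rfloor}\right].$$
   Context: A threshold graph on $n\ge1$ vertices is built from a base vertex $v_0$ by successively adding $v_1,\dots,v_{n-1}$, each either isolated (adjacent to no earlier vertex) or dominating (adjacent to all earlier vertices); its creation sequence $\mathrm{seq}(G)=s_1\cdots s_{n-1}$ has $s_i=1$ if $v_i$ is dominating and $s_i=0$ otherwise, and each unlabeled threshold graph on $n$ vertices corresponds to exactly one binary string of length $n-1$. A random threshold graph on $n$ vertices is one whose creation sequence is uniformly distributed over all $2^{n-1}$ binary strings of length $n-1$. *)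

From mathcomp Require Import all_boot all_order all_algebra.
Set Implicit Arguments. Unset Strict Implicit. Unset Printing Implicit Defensive.
Import Order.TTheory GRing.Theory Num.Theory.

(* Threshold graph on vertex set 'I_n = {v_0,...,v_{n-1}} with creation
   sequence s = s_1 ... s_{n-1}, stored as an (n-1)-tuple with
   s_i = nth false s (i-1). *)

Definition dominating (n : nat) (s : (n.-1).-tuple bool) (j : nat) : bool :=
  (0 < j) && nth false s j.-1.

Definition tg_adj (n : nat) (s : (n.-1).-tuple bool) : rel 'I_n :=
  fun i j => (i != j) && dominating s (maxn i j).

Definition has_cycle_of_length (n : nat) (s : (n.-1).-tuple bool) (k : nat) : bool :=
  (3 <= k) && [exists t : k.-tuple 'I_n, uniq t && cycle (tg_adj s) t].

(* psi(G): length of a longest cycle (0 if G is acyclic). *)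
Definition longest_cycle (n : nat) (s : (n.-1).-tuple bool) : nat :=
  \max_(k < n.+1 | has_cycle_of_length s k) k.

Definition tg_prob (n : nat) (E : pred ((n.-1).-tuple bool)) : rat :=
  (#|E|%:R / (2 ^ n.-1)%:R)%R.

From mathcomp Require Import all_boot all_order all_algebra.
From mathcomp Require Import zify.
Import GRing.Theory.
Set Implicit Arguments. Unset Strict Implicit. Unset Printing Implicit Defensive.

(* Appending an isolated vertex does not change the circumference. Appending a
   dominating vertex to a graph with creation sequence d gives circumference
   (size d + 2) - excess d (or 0 if this is below 3), where excess d is the walk
   that steps up on isolated and down on dominating vertices, reflected at 0.
   For the upper bound, pick the suffix of d realising the excess: on a cycle
   every isolated vertex of that suffix is followed by a later dominating one,
   and so is every entry of the cycle into the suffix, so the suffix vertices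
   missed by the cycle are at least the excess. A greedy construction attains
   the bound. Reflected walks of length m ending at r are counted by
   'C(m, (m - r)./2), and Pascal's rule sums these up to the formula. *)

(* [dom], [tadj], [has_cycle] and [circumference] are [dominating], [tg_adj],
   [has_cycle_of_length] and [longest_cycle] with the creation sequence taken as
   a plain sequence, so that it can grow by [rcons]; they agree by conversion. *)
Definition dom (d : seq bool) (x : nat) : bool := (0 < x) && nth false d x.-1.

Definition tadj (d : seq bool) : rel nat := fun i j => (i != j) && dom d (maxn i j).

Definition has_cycle (n : nat) (d : seq bool) (k : nat) : bool :=
  (3 <= k) && [exists t : k.-tuple 'I_n, uniq t && cycle (relpre val (tadj d)) t].

Definition circumference (n : nat) (d : seq bool) : nat :=
  \max_(k < n.+1 | has_cycle n d k) k.

Lemma has_cycle_leq n d k : has_cycle n d k -> k <= n.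
Proof.
case/andP=> _ /existsP [t /andP [ut _]].
have := uniq_leq_size ut (fun x _ => mem_enum 'I_n x).
by rewrite size_tuple size_enum_ord.
Qed.

Lemma has_cycleP n d k : reflect (3 <= k /\ exists l : seq nat, [/\ size l = k, uniq l,
   all (fun x => x < n.+1) l & cycle (tadj d) l]) (has_cycle n.+1 d k).
Proof.
have cycle_val (t : seq 'I_n.+1) : cycle (tadj d) (map val t) = cycle (relpre val (tadj d)) t.
  by rewrite cycle_map.
apply: (iffP andP) => -[k3 H]; split => //.
  case/existsP: H => t /andP [ut ct].
  exists (map val t); split.
  - by rewrite size_map size_tuple.
  - by rewrite map_inj_uniq //; exact: val_inj.
  - by apply/allP => x /mapP [y _ ->]; exact: ltn_ord.
  - by rewrite cycle_val.
case: H => l [sl ul al cl].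
set t := map (fun x => inord x : 'I_n.+1) l.
have sz : size t == k by rewrite size_map sl.
have tl : map val t = l.
  rewrite -map_comp -[RHS]map_id; apply/eq_in_map => x xl /=.
  by rewrite inordK //; exact: (allP al).
apply/existsP; exists (Tuple sz) => /=.
by rewrite -(map_inj_uniq val_inj) -cycle_val tl ul.
Qed.

Lemma has_cycle_le_circumference n d k : has_cycle n d k -> k <= circumference n d.
Proof.
move=> hk; have kn : k < n.+1 by rewrite ltnS; exact: has_cycle_leq hk.
exact: (@leq_bigmax_cond _ (fun j : 'I_n.+1 => has_cycle n d j) val (Ordinal kn)).
Qed.

Lemma circumference_leq n d : circumference n d <= n.
Proof. by apply/bigmax_leqP => j _; rewrite -ltnS. Qed.

Lemma circumference_eq n d c :
    (forall k, has_cycle n d k -> k <= c) -> (3 <= c -> has_cycle n d c) -> c <= n ->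
  circumference n d = if 3 <= c then c else 0.
Proof.
move=> ub ex cn; apply/eqP; rewrite eqn_leq; apply/andP; split.
  apply/bigmax_leqP => k hk; have := ub _ hk; case/andP: hk => k3 _.
  by case: ifP => //; lia.
by case: ifP => // c3; exact: has_cycle_le_circumference (ex c3).
Qed.

Lemma tadj_sym d : symmetric (tadj d).
Proof. by move=> i j; rewrite /tadj eq_sym maxnC. Qed.

Lemma dom_rcons d b x : x <= size d -> dom (rcons d b) x = dom d x.
Proof.
by rewrite /dom; case: x => [|x] //= h; rewrite nth_rcons; case: ltnP => //; lia.
Qed.

Lemma dom_rcons_last d b : dom (rcons d b) (size d).+1 = b.
Proof. by rewrite /dom /= nth_rcons ltnn eqxx. Qed.

Lemma tadj_rcons d b i j : i <= size d -> j <= size d -> tadj (rcons d b) i j = tadj d i j.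
Proof. by move=> hi hj; rewrite /tadj dom_rcons // geq_max hi hj. Qed.

Lemma tadj_rcons_true_last d x : x <= size d -> tadj (rcons d true) x (size d).+1.
Proof.
move=> hx; rewrite /tadj (maxn_idPr (leqW hx)) dom_rcons_last andbT.
by rewrite neq_ltn ltnS hx.
Qed.

Lemma path_tadj_rcons d b h t : all (fun x => x <= size d) (h :: t) ->
  path (tadj (rcons d b)) h t = path (tadj d) h t.
Proof.
move=> al; apply: (eq_in_path (P := fun x => x <= size d)) => // i j hi hj.
exact: tadj_rcons.
Qed.

Fixpoint up_crossings (p x : nat) (s : seq nat) : nat :=
  if s is y :: s' then (x < p <= y) + up_crossings p y s' else 0.

Section Crossings.
Variables (e : seq bool) (p : nat).

Definition high_iso (x : nat) : bool := (p <= x) && ~~ dom e x.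
Definition high_dom (x : nat) : bool := (p <= x) && dom e x.

Lemma tadj_high_dom x y : tadj e x y -> high_iso x + (x < p <= y) <= high_dom y.
Proof.
rewrite /tadj /high_iso /high_dom => /andP [nxy D].
case: (leqP x y) => hxy.
  rewrite (maxn_idPr hxy) in D; rewrite D.
  by move: nxy hxy; case: (dom e x) => /= nxy hxy; lia.
rewrite (maxn_idPl (ltnW hxy)) in D; rewrite D.
by move: hxy; case: (dom e y) => /= hxy; lia.
Qed.

Lemma path_high_iso_le x s : path (tadj e) x s ->
  count high_iso (belast x s) + up_crossings p x s <= count high_dom s.
Proof.
elim: s x => [|y s IH] x //= /andP [a ps].
by have := IH _ ps; have := tadj_high_dom a; lia.
Qed.

Lemma up_crossings_gt0_low x s : x < p -> has (fun y => p <= y) s ->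
  0 < up_crossings p x s.
Proof.
elim: s x => [|y s IH] x //= xp /orP [py|hs]; first lia.
by case: (leqP p y) => py; [lia | have := IH _ py hs; lia].
Qed.

Lemma up_crossings_gt0_last x s : has (fun y => y < p) (x :: s) -> p <= last x s ->
  0 < up_crossings p x s.
Proof.
elim: s x => [|y s IH] x /=; first by rewrite orbF; lia.
move=> H L; case: (ltnP x p) => xp.
  case: (leqP p y) => py; first lia.
  by have := IH y; rewrite /= py => /(_ isT L); lia.
have H' : has (fun y => y < p) (y :: s) by move: H => /= /orP [H|//]; lia.
by have := IH y H' L; lia.
Qed.

Lemma cycle_high_iso_le l : cycle (tadj e) l ->
  count high_iso l + (has (fun x => x < p) l && has (fun x => p <= x) l)
  <= count high_dom l.
Proof.
case: l => [|x0 s] // C.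
have E : count high_dom (rcons s x0) = count high_dom (x0 :: s).
  by rewrite -cats1 count_cat /= addn0 addnC.
have := path_high_iso_le C; rewrite belast_rcons E.
apply: leq_trans; rewrite leq_add2l.
case/boolP: (_ && _) => // /andP [hlt hge].
case: (ltnP x0 p) => xp.
  apply: up_crossings_gt0_low => //.
  by rewrite -cats1 has_cat; move: hge => /= /orP [h|->] //; lia.
apply: up_crossings_gt0_last; last by rewrite last_rcons.
by move: hlt => /= /orP [->|h] //; rewrite -cats1 has_cat h orbT.
Qed.

Lemma count_ge_split l : count (fun x => p <= x) l = count high_iso l + count high_dom l.
Proof.
elim: l => //= x l ->.
have : high_iso x + high_dom x = (p <= x).
  by rewrite /high_iso /high_dom; case: (dom e x); case: (p <= x).
lia.
Qed.

End Crossings.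

Definition excess (d : seq bool) : nat :=
  foldl (fun r (b : bool) => if b then r.-1 else r.+1) 0 d.

Lemma excess_rcons d b : excess (rcons d b) = if b then (excess d).-1 else (excess d).+1.
Proof. by rewrite /excess foldl_rcons. Qed.

Lemma excess_leq d : excess d <= size d.
Proof.
by elim/last_ind: d => [|d b IH] //; rewrite excess_rcons size_rcons; case: b; lia.
Qed.

(* The suffix starts after the last visit of the walk to 0, from where on the
   reflection at 0 never acts. *)
Lemma excess_suffix d : exists2 q, q <= size d &
  excess d + count id (drop q d) = count negb (drop q d).
Proof.
elim/last_ind: d => [|d b [q hq E]]; first by exists 0.
rewrite excess_rcons size_rcons; case: b.
  case: (posnP (excess d)) => R0.
    by exists (size d).+1; rewrite ?drop_oversize ?size_rcons //= R0.
  by exists q; [lia | rewrite drop_rcons // -cats1 !count_cat /=; lia].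
by exists q; [lia | rewrite drop_rcons // -cats1 !count_cat /=; lia].
Qed.

Lemma count_leq_uniq (l s : seq nat) (a : pred nat) : uniq l ->
  {subset [seq x <- l | a x] <= s} -> count a l <= size s.
Proof. by move=> ul sub; rewrite -size_filter; apply: uniq_leq_size (filter_uniq _ ul) _. Qed.

Lemma count_dom_iota e q k : count (dom e) (iota q.+1 k) = count id (take k (drop q e)).
Proof.
elim: k q => [|k IH] q; first by rewrite take0.
rewrite /= IH /dom /=.
case: (ltnP q (size e)) => h; first by rewrite (drop_nth false h).
by rewrite !drop_oversize ?nth_default //; lia.
Qed.

Lemma cycle_size_leq d l : uniq l -> all (fun x => x < (size d).+2) l ->
  cycle (tadj (rcons d true)) l -> size l <= (size d).+2 - excess d.
Proof.
move=> ul al cl.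
have [q hq E] := excess_suffix d.
set e := rcons d true; set p := q.+1.
(* The vertices from p on are those of the suffix drop q d and the last one. *)
have hA := cycle_high_iso_le p cl.
have hL : count (fun x => x < p) l <= p.
  rewrite -[X in _ <= X](size_iota 0 p); apply: count_leq_uniq => // x.
  by rewrite mem_filter mem_iota => /andP [h _].
have hO : count (high_dom e p) l <= (count id (drop q d)).+1.
  have <- : count (dom e) (iota p ((size d).+1 - q)) = (count id (drop q d)).+1.
    rewrite count_dom_iota take_oversize; last by rewrite size_drop size_rcons; lia.
    by rewrite /e drop_rcons // -cats1 count_cat /= addn1.
  rewrite -[X in _ <= X]size_filter; apply: count_leq_uniq => // x.
  rewrite !mem_filter /high_dom mem_iota => /andP [/andP [h1 ->] xl] /=.
  by have := allP al x xl; lia.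
have hS : size l = count (fun x => x < p) l + count (high_iso e p) l
                   + count (high_dom e p) l.
  rewrite -addnA -count_ge_split -(count_predC (fun x => x < p)); congr (_ + _).
  by apply: eq_count => x /=; rewrite -leqNgt.
have hD : count id (drop q d) + count negb (drop q d) = size d - q.
  by rewrite count_predC size_drop.
by rewrite !has_count (count_ge_split e) -/e in hA; lia.
Qed.

Lemma exists_fresh_vertex m (l : seq nat) : size l <= m ->
  exists2 z, z <= m & z \notin l.
Proof.
move=> sl; have : ~~ all (mem l) (iota 0 m.+1).
  apply/negP => /allP /(uniq_leq_size (iota_uniq 0 m.+1)).
  by rewrite size_iota ltnNge sl.
by case/allPn => z; rewrite mem_iota => /andP [_ hz] nz; exists z.
Qed.

(* A new dominating vertex is prepended to the path, preceded by a vertex the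
   path misses when the excess stays positive. *)
Lemma exists_long_path d : exists h t, [/\ uniq (h :: t),
  all (fun x => x <= size d) (h :: t), path (tadj d) h t
  & size t = size d - excess d].
Proof.
elim/last_ind: d => [|d b [h [t [u al pa sz]]]]; first by exists 0, [::].
have al' : all (fun x => x <= (size d).+1) (h :: t).
  by apply/allP => x /(allP al) /leqW.
have pa' : path (tadj (rcons d b)) h t by rewrite path_tadj_rcons.
have hR := excess_leq d.
have hh : h <= size d := allP al h (mem_head _ _).
have nw : (size d).+1 \notin h :: t by apply/negP => /(allP al); lia.
rewrite excess_rcons size_rcons; case: b al' pa' => al' pa'; last first.
  by exists h, t.
case: (posnP (excess d)) => R0.
  exists (size d).+1, (h :: t); split.
  - by rewrite cons_uniq nw u.
  - by rewrite /= leqnn.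
  - by rewrite /= pa' andbT tadj_sym tadj_rcons_true_last.
  - by rewrite /= sz R0; lia.
have [z hz nz] : exists2 z, z <= size d & z \notin h :: t.
  by apply: exists_fresh_vertex; rewrite /= sz; lia.
exists z, ((size d).+1 :: h :: t); split.
- rewrite cons_uniq inE negb_or nz andbT cons_uniq nw u andbT.
  by rewrite neq_ltn ltnS hz.
- by rewrite /= leqnn leqW.
- by rewrite /= pa' andbT tadj_rcons_true_last //= tadj_sym tadj_rcons_true_last.
- by rewrite /= sz; lia.
Qed.

Lemma circumference_rcons_true d : circumference (size d).+2 (rcons d true) =
  if 3 <= (size d).+2 - excess d then (size d).+2 - excess d else 0.
Proof.
apply: circumference_eq; last lia.
  by move=> j /has_cycleP [_ [l [<- ul al cl]]]; exact: cycle_size_leq.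
move=> h3; apply/has_cycleP; split => //.
have [h [t [u al pa sz]]] := exists_long_path d.
have hh : h <= size d := allP al h (mem_head _ _).
exists ((size d).+1 :: h :: t); split.
- by have := excess_leq d; rewrite /= sz; lia.
- by rewrite cons_uniq u andbT; apply/negP => /(allP al); lia.
- by apply/allP => x; rewrite inE => /orP [/eqP ->|/(allP al)]; lia.
- rewrite /= rcons_path path_tadj_rcons // pa /= tadj_sym tadj_rcons_true_last //=.
  by apply: tadj_rcons_true_last; apply: (allP al); exact: mem_last.
Qed.

Lemma has_cycle_rcons_false d k :
  has_cycle (size d).+2 (rcons d false) k = has_cycle (size d).+1 d k.
Proof.
have tadjE l : all (fun x => x < (size d).+1) l ->
    cycle (tadj (rcons d false)) l = cycle (tadj d) l.
  move=> al; apply: (eq_in_cycle (P := fun x => x < (size d).+1)) => // i j hi hj.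
  exact: tadj_rcons.
apply/has_cycleP/has_cycleP => -[k3 [l [sl ul al cl]]]; split => //; exists l.
  have al' : all (fun x => x < (size d).+1) l.
    apply/allP => x xl; have := allP al x xl; rewrite ltnS leq_eqVlt.
    case/orP=> // /eqP ex; have := next_cycle cl xl.
    have := allP al _ (etrans (mem_next l x) xl).
    by rewrite /tadj ex ltnS => /maxn_idPl ->; rewrite dom_rcons_last andbF.
  by rewrite -tadjE.
have al' : all (fun x => x < (size d).+2) l by apply/allP => x /(allP al); lia.
by rewrite tadjE.
Qed.

Lemma circumference_rcons_false d :
  circumference (size d).+2 (rcons d false) = circumference (size d).+1 d.
Proof.
apply/eqP; rewrite eqn_leq; apply/andP; split; apply/bigmax_leqP => k.
  by rewrite has_cycle_rcons_false => /has_cycle_le_circumference.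
by rewrite -has_cycle_rcons_false => /has_cycle_le_circumference.
Qed.

Fixpoint bool_seqs m : seq (seq bool) :=
  if m is m'.+1 then [seq rcons s true | s <- bool_seqs m'] ++
                     [seq rcons s false | s <- bool_seqs m']
  else [:: [::]].

Lemma mem_bool_seqs m s : (s \in bool_seqs m) = (size s == m).
Proof.
elim: m s => [|m IH] s /=; first by rewrite inE; case: s.
rewrite mem_cat; apply/idP/idP.
  by case/orP => /mapP [t]; rewrite IH => /eqP <- ->; rewrite size_rcons.
case/lastP: s => [|s b] //; rewrite size_rcons eqSS -IH => h.
by case: b; rewrite ?(map_f (rcons^~ true) h) ?(map_f (rcons^~ false) h) ?orbT.
Qed.

Lemma uniq_bool_seqs m : uniq (bool_seqs m).
Proof.
have rcons_injl (b : bool) : injective (rcons^~ b) by move=> x y /rcons_inj [].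
elim: m => [|m IH] //=; rewrite cat_uniq !(map_inj_uniq (rcons_injl _)) IH /= andbT.
apply/hasPn => x /mapP [s _ ->]; apply/negP => /mapP [t _ /(congr1 (last true))].
by rewrite !last_rcons.
Qed.

Lemma card_tuple_bool m (P : pred (seq bool)) :
  #|[pred t : m.-tuple bool | P t]| = count P (bool_seqs m).
Proof.
rewrite cardE /enum_mem size_filter -enumT (@eq_count _ _ (preim val P)) // -count_map.
apply/permP; apply: uniq_perm.
- by rewrite map_inj_uniq ?enum_uniq //; exact: val_inj.
- exact: uniq_bool_seqs.
move=> x; rewrite mem_bool_seqs; apply/mapP/idP.
  by case=> t _ ->; rewrite size_tuple.
by move=> h; exists (Tuple h); rewrite ?mem_enum.
Qed.

Lemma count_predn_eq (T : Type) (f : T -> nat) r s :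
  count (fun x => (f x).-1 == r) s =
  count (fun x => f x == r.+1) s + (r == 0) * count (fun x => f x == 0) s.
Proof.
elim: s => [|x s IH] /=; first lia.
by rewrite IH; case: (f x) => [|a] /=; move: IH; case: r => [|r] /= _; lia.
Qed.

Lemma count_succn_eq (T : Type) (f : T -> nat) r s :
  count (fun x => (f x).+1 == r) s = (0 < r) * count (fun x => f x == r.-1) s.
Proof.
elim: s => [|x s IH] /=; first lia.
by rewrite IH; move: IH; case: r => [|r] /= _; lia.
Qed.

Definition excess_count (m r : nat) : nat := if r <= m then 'C(m, (m - r)./2) else 0.

Lemma excess_count0S m : excess_count m 1 + excess_count m 0 = excess_count m.+1 0.
Proof.
rewrite /excess_count /= !subn0; case: m => [|m] //=.
rewrite subn1 /= binS addnC; congr (_ + _).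
case/boolP: (odd m) => om; first by have -> : uphalf m = (m./2).+1 by lia.
by rewrite -bin_sub; [congr 'C(_, _) | ]; lia.
Qed.

Lemma excess_countSS m r :
  excess_count m r.+2 + excess_count m r = excess_count m.+1 r.+1.
Proof.
rewrite /excess_count subSS.
case: (ltnP m r) => h; first by rewrite !ifN //; lia.
case: (ltnP r m) => h2; last first.
  have -> : r = m by lia.
  by rewrite ifN ?ifT ?subnn ?bin0 //; lia.
rewrite [in RHS]ifT; last lia.
case: (ltnP r.+1 m) => h3.
  have -> : (m - r)./2 = ((m - r.+2)./2).+1 by lia.
  by rewrite binS addnC.
have -> : m - r = 1 by lia.
by rewrite !bin0.
Qed.

Lemma count_excess m r : count (fun d => excess d == r) (bool_seqs m) = excess_count m r.
Proof.
elim: m r => [|m IH] r; first by rewrite /excess_count /=; case: r.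
rewrite /= count_cat !count_map.
rewrite (@eq_count _ _ (fun d => (excess d).-1 == r)); last by move=> d; rewrite /= excess_rcons.
rewrite (@eq_count _ (preim _ _) (fun d => (excess d).+1 == r)); last first.
  by move=> d; rewrite /= excess_rcons.
rewrite count_predn_eq count_succn_eq !IH.
case: r => [|r] /=; first by rewrite !mul1n mul0n addn0 excess_count0S.
by rewrite mul0n addn0 mul1n excess_countSS.
Qed.

Lemma count_circumferenceS m k : 3 <= k ->
  count (fun d => circumference m.+2 d == k) (bool_seqs m.+1) =
  count (fun d => circumference m.+1 d == k) (bool_seqs m)
  + (k <= m.+2) * excess_count m (m.+2 - k).
Proof.
move=> k3; rewrite /= count_cat !count_map addnC; congr (_ + _).
  apply: eq_in_count => d; rewrite mem_bool_seqs => /eqP <- /=.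
  by rewrite circumference_rcons_false.
rewrite -count_excess.
have circE d : d \in bool_seqs m -> (circumference m.+2 (rcons d true) == k)
                 = (k <= m.+2) && (excess d == m.+2 - k).
  rewrite mem_bool_seqs => /eqP hs; have := excess_leq d.
  rewrite -hs circumference_rcons_true hs => hR.
  by case: ifP => h; apply/eqP/idP => [E|/andP [hk /eqP E]]; lia.
case: (leqP k m.+2) => hk; rewrite ?mul1n ?mul0n.
  by apply: eq_in_count => d /circE /= ->; rewrite hk.
rewrite -(count_pred0 (bool_seqs m)); apply: eq_in_count => d /circE /= ->.
by rewrite leqNgt hk.
Qed.

Lemma count_circumference m k : 3 <= k -> k <= m.+2 ->
  count (fun d => circumference m.+1 d == k) (bool_seqs m) = 'C(m, k./2) - 'C(k - 2, k./2).
Proof.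
elim: m k => [|m IH] k k3 km; first lia.
rewrite count_circumferenceS //.
case: (ltnP m.+2 k) => hk.
  have -> : k = m.+3 by lia.
  rewrite mul0n addn0 subnn -(count_pred0 (bool_seqs m)).
  apply: eq_in_count => d _ /=.
  by apply/eqP => E; have := circumference_leq m.+1 d; rewrite E; lia.
rewrite IH // mul1n /excess_count ifT; last lia.
have -> : (m - (m.+2 - k))./2 = (k./2).-1 by lia.
have -> : k./2 = ((k./2).-1).+1 by lia.
by rewrite [in RHS]binS -pred_Sn; have := @leq_bin2l (k - 2) m ((k./2).-1).+1; lia.
Qed.

Theorem mainTheorem10 (n k : nat) (hn : 3 <= n) (hk3 : 3 <= k) (hkn : k <= n) :
  tg_prob (fun s : (n.-1).-tuple bool => longest_cycle s == k) =
  ((2%:R^-1) ^+ n.-1 * ('C(n.-1, k./2)%:R - 'C(k - 2, k./2)%:R) : rat)%R.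
Proof.
case: n hn hkn => [|m] // hn hkn; rewrite /tg_prob /=.
have -> : #|(fun s : m.-tuple bool => @longest_cycle m.+1 s == k)|
          = count (fun d => circumference m.+1 d == k) (bool_seqs m).
  by rewrite -card_tuple_bool; apply: eq_card.
rewrite count_circumference //; last lia.
have hb : 'C(k - 2, k./2) <= 'C(m, k./2) by apply: leq_bin2l; lia.
by rewrite natrB // natrX exprVn mulrC.
Qed.
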